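(* Let $\mathcal X,\mathcal U$ be finite nonempty sets, $f:\mathcal X\times\mathcal U\to\mathcal X$ and $g:\mathcal X\to\mathbb R$. Let $v_{\mathrm A}^*(x)=\max_{\mathbf u\in\mathbb U}\min_{\tau\in\mathbb N} g(\xi_x^{\mathbf u}(\tau))$. Then there is a policy $\pi\in\Pi$ such that $v_{\mathrm A}^*(x)=\min_{\tau\in\mathbb N} g(\xi_x^\pi(\tau))$ for all $x\in\mathcal X$.
   Context: $\mathbb N=\{0,1,\dots\}$; $\Pi$ is the set of maps $\mathcal X\to\mathcal U$; $\mathbb U$ is the set of sequences $\mathbb N\to\mathcal U$. For $\pi\in\Pi$: $\xi_x^\pi(0)=x$, $\xi_x^\pi(t+1)=f(\xi_x^\pi(t),\pi(\xi_x^\pi(t)))$. For $\mathbf u\in\mathbb U$: $\xi_x^{\mathbf u}(0)=x$, $\xi_x^{\mathbf u}(t+1)=f(\xi_x^{\mathbf u}(t),\mathbf u(t))$. *)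

From mathcomp Require Import all_boot all_order all_algebra.
From mathcomp Require Import all_classical all_reals.
Set Implicit Arguments. Unset Strict Implicit. Unset Printing Implicit Defensive.
Import Order.TTheory GRing.Theory Num.Theory.
Local Open Scope classical_set_scope.
Local Open Scope ring_scope.

Fixpoint traj_pi (X U : Type) (f : X -> U -> X) (pi : X -> U) (x : X) (t : nat) : X :=
  match t with
  | 0%N => x
  | t'.+1 => let y := traj_pi f pi x t' in f y (pi y)
  end.

Fixpoint traj_u (X U : Type) (f : X -> U -> X) (u : nat -> U) (x : X) (t : nat) : X :=
  match t with
  | 0%N => x
  | t'.+1 => f (traj_u f u x t') (u t')
  end.

(* min_{tau in N} s tau, as the infimum of the range (attained when the range is finite) *)
Definition min_nat (R : realType) (s : nat -> R) : R := inf (range s).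

Definition vA (R : realType) (X U : Type) (f : X -> U -> X) (g : X -> R) (x : X) : R :=
  sup [set min_nat (fun t => g (traj_u f u x t)) | u in [set: nat -> U]].

(* The value function v := vA f g satisfies v x <= g x and the Bellman
   inequality v x <= max_a v (f x a): an open-loop input from x is no better
   than its first input followed by the best continuation.  Hence along the
   closed-loop trajectory of the greedy policy x |-> argmax_a v (f x a) the
   value never decreases, so v x <= v (xi t) <= g (xi t) for every t.
   Conversely, that closed-loop trajectory is the open-loop trajectory of the
   input t |-> pi (xi t), so its minimum of g is at most v x. *)
From mathcomp Require Import all_boot all_order all_algebra.
From mathcomp Require Import all_classical all_reals.
Set Implicit Arguments.
Unset Strict Implicit.
Unset Printing Implicit Defensive.
Import Order.TTheory GRing.Theory Num.Theory.
Local Open Scope classical_set_scope.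
Local Open Scope ring_scope.

Lemma traj_u_succ (X U : Type) (f : X -> U -> X) (u : nat -> U) x t :
  traj_u f u x t.+1 = traj_u f (fun k => u k.+1) (f x (u 0%N)) t.
Proof. by elim: t => [|t IH] //; rewrite [RHS]/= -IH. Qed.

Lemma traj_pi_open_loop (X U : Type) (f : X -> U -> X) (pi : X -> U) x t :
  traj_pi f pi x t = traj_u f (fun k => pi (traj_pi f pi x k)) x t.
Proof. by elim: t => [|t IH] //=; rewrite IH. Qed.

Section MinNat.
Variable R : realType.

Lemma min_nat_le (s : nat -> R) c t : (forall k, c <= s k) -> min_nat s <= s t.
Proof. by move=> s_ge; apply: ge_inf; [exists c => _ [k _ <-] | exists t]. Qed.

Lemma min_nat_ge (s : nat -> R) c : (forall t, c <= s t) -> c <= min_nat s.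
Proof.
move=> s_ge; apply: lb_le_inf; first by exists (s 0%N), 0%N.
by move=> _ [k _ <-].
Qed.

End MinNat.

Section MaxMinValue.
Variables (R : realType) (X U : finType) (u0 : U) (f : X -> U -> X) (g : X -> R).

Let v := vA f g.

Let M : R := \sum_(y : X) `|g y|.

Let norm_g_le y : `|g y| <= M.
Proof. by rewrite /M (bigD1 y) //= lerDl sumr_ge0. Qed.

Let g_ge y : - M <= g y.
Proof. by move: (norm_g_le y); rewrite ler_norml => /andP[]. Qed.

Let g_le y : g y <= M.
Proof. by move: (norm_g_le y); rewrite ler_norml => /andP[]. Qed.

Let min_g_le (s : nat -> X) t : min_nat (fun t => g (s t)) <= g (s t).
Proof. by apply: (@min_nat_le _ _ (- M)) => k; apply: g_ge. Qed.

Lemma vA_ge_min x u : min_nat (fun t => g (traj_u f u x t)) <= v x.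
Proof.
apply: ub_le_sup; last by exists u.
by exists M => _ [w _ <-]; apply: le_trans (min_g_le _ 0%N) _.
Qed.

Lemma vA_le x c : (forall u, min_nat (fun t => g (traj_u f u x t)) <= c) -> v x <= c.
Proof.
move=> min_le; apply: ge_sup; last by move=> _ [u _ <-].
by exists (min_nat (fun t => g (traj_u f (fun=> u0) x t))), (fun=> u0).
Qed.

Lemma vA_le_g x : v x <= g x.
Proof. by apply: vA_le => u; apply: (min_g_le (traj_u f u x) 0%N). Qed.

Lemma min_traj_le_vA_succ x u :
  min_nat (fun t => g (traj_u f u x t)) <= v (f x (u 0%N)).
Proof.
apply: le_trans (vA_ge_min _ (fun k => u k.+1)).
by apply: min_nat_ge => t; rewrite -traj_u_succ; apply: min_g_le.
Qed.

Definition greedy x : U := [arg max_(a > u0) v (f x a)]%O.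

Lemma vA_le_greedy x : v x <= v (f x (greedy x)).
Proof.
apply: vA_le => u; apply: le_trans (min_traj_le_vA_succ x u) _.
by rewrite /greedy; case: arg_maxP => // a _; apply.
Qed.

Lemma vA_le_traj_greedy x t : v x <= v (traj_pi f greedy x t).
Proof. by elim: t => [|t IH] //; apply: le_trans IH (vA_le_greedy _). Qed.

End MaxMinValue.

Theorem mainTheorem3 (R : realType) (X U : finType) (x0 : X) (u0 : U)
  (f : X -> U -> X) (g : X -> R) :
  exists pi : X -> U, forall x : X,
    vA f g x = min_nat (fun t => g (traj_pi f pi x t)).
Proof.
exists (greedy u0 f g) => x; apply/le_anti/andP; split.
  apply: min_nat_ge => t.
  exact: le_trans (vA_le_traj_greedy u0 f g x t) (vA_le_g u0 f g _).
under eq_fun do rewrite traj_pi_open_loop.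
exact: vA_ge_min.
Qed.
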